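(* Let $\alpha>0$. The general solution on $z>-1$ of the linear ODE $$(1+z)^2\frac{d^2\delta}{dz^2}+\frac12(1+z)\frac{\alpha(1+z)^3-2}{\alpha(1+z)^3+1}\frac{d\delta}{dz}-\frac12\frac{3\alpha(1+z)^3}{\alpha(1+z)^3+1}\,\delta=0$$ is $$\delta(z)=\kappa_1\sqrt{1+\alpha(1+z)^3}+\kappa_2\frac{1}{1+z}\,{}_2F_1\!\Big(1,\tfrac13;\tfrac{11}{6};-\frac{1}{\alpha(1+z)^3}\Big),\qquad \kappa_1,\kappa_2\in\mathbb R.$$
   Context: ${}_2F_1(a,b;c;x)$ denotes the Gauss hypergeometric function (the argument $-1/(\alpha(1+z)^3)$ may lie outside the unit disk, in which case ${}_2F_1$ means its analytic continuation to $\mathbb C\setminus[1,\infty)$). This ODE is the linearized density-contrast equation for a flat universe with dust and cosmological constant, $\alpha=\Omega_m/\Omega_\Lambda$. *)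

From Stdlib Require Import Reals Lra ClassicalEpsilon.
From Coquelicot Require Import Coquelicot.
Open Scope R_scope.

Fixpoint poch (a : R) (n : nat) : R :=
  match n with
  | O => 1
  | S m => poch a m * (a + INR m)
  end.

Definition hyp_coef (a b c : R) (n : nat) : R :=
  poch a n * poch b n / (poch c n * INR (Stdlib.Arith.Factorial.fact n)).

(* F is the (real) analytic continuation of the Gauss series 2F1(a,b;c;.)
   to (-oo,1) (= restriction to the real axis of the continuation to
   C \ [1,oo)): it agrees with the series on (-1,1) and is real-analytic
   on (-oo,1). *)
Definition is_2F1_continuation (a b c : R) (F : R -> R) : Prop :=
  (forall x, -1 < x < 1 -> F x = PSeries (hyp_coef a b c) x) /\
  (forall x0, x0 < 1 -> exists r : R, 0 < r /\ exists an : nat -> R,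
       forall y, Rabs (y - x0) < r -> is_pseries an (y - x0) (F y)).

Definition hyp2F1 (a b c : R) : R -> R :=
  epsilon (inhabits (fun _ : R => 0)) (is_2F1_continuation a b c).

Definition is_ode_solution (alpha : R) (delta : R -> R) : Prop :=
  exists d1 d2 : R -> R, forall z, -1 < z ->
    is_derive delta z (d1 z) /\ is_derive d1 z (d2 z) /\
    (1 + z) ^ 2 * d2 z
    + / 2 * (1 + z) * ((alpha * (1 + z) ^ 3 - 2) / (alpha * (1 + z) ^ 3 + 1)) * d1 z
    - / 2 * ((3 * alpha * (1 + z) ^ 3) / (alpha * (1 + z) ^ 3 + 1)) * delta z = 0.

Definition general_sol (alpha k1 k2 : R) (z : R) : R :=
  k1 * sqrt (1 + alpha * (1 + z) ^ 3)
  + k2 * (/ (1 + z)) * hyp2F1 1 (1/3) (11/6) (- / (alpha * (1 + z) ^ 3)).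

From Stdlib Require Import Reals Lra Psatz Lia ClassicalEpsilon Factorial.
From Coquelicot Require Import Coquelicot.
Open Scope R_scope.

(* Write [u = 1 + z], [A = 1 + alpha u^3] and [t = -1 / (alpha u^3) < 0].
   The hypergeometric function [F = 2F1(1, 1/3; 11/6; .)] is realised on
   [(-oo, 1)] by the Euler integral [int_0^1 sqrt (1 - s^3) / (1 - x s^3) ds],
   normalised by its value at [0]: integrating by parts against
   [(1 - s^3)^(3/2)], its moments follow the Pochhammer recurrence of the
   series; expanding the integrand geometrically, it is a power series around
   every [x0 < 1], so by the identity theorem it is the analytic
   continuation; and a further integration by parts gives the
   hypergeometric equation.  Then [sqrt A] and [F t / u] solve the
   density-contrast equation.  Finally [(A y' - A' y / 2) / u] is a first
   integral, it vanishes exactly on the multiples of [sqrt A], and it does not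
   vanish on [F t / u], whose ratio to [sqrt A] tends to [0] as [z -> oo];
   so every solution is a combination of the two. *)

(* Coquelicot's lemmas produce [plus], [scal], ... and equalities in
   structures whose carrier is only convertible to [R]; [ring] and [field]
   need the plain operations on [R]. *)
Ltac to_R :=
  repeat change (plus ?a ?b) with (a + b); repeat change (minus ?a ?b) with (a - b);
  repeat change (scal ?a ?b) with (a * b); repeat change (mult ?a ?b) with (a * b);
  try match goal with |- @eq _ ?a ?b => change (@eq R a b) end.

Tactic Notation "to_R" "in" hyp(H) :=
  repeat change (plus ?a ?b) with (a + b) in H; repeat change (minus ?a ?b) with (a - b) in H;
  repeat change (scal ?a ?b) with (a * b) in H; repeat change (mult ?a ?b) with (a * b) in H.

Ltac nonzero :=
  let E := fresh in intro E; repeat (apply Rmult_integral in E; destruct E as [E|E]); lra.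

Lemma continuous_of_ex_derive (f : R -> R) x : ex_derive f x -> continuous f x.
Proof. apply (@ex_derive_continuous R_AbsRing R_NormedModule). Qed.

Lemma locally_R (x r : R) (P : R -> Prop) :
  0 < r -> (forall t, Rabs (t - x) < r -> P t) -> locally x P.
Proof. intros Hr HP. exists (mkposreal r Hr). intros t Ht. now apply HP. Qed.

Lemma is_derive_eq (f : R -> R) x l l' : is_derive f x l -> l = l' -> is_derive f x l'.
Proof. now intros H <-. Qed.

Lemma is_RInt_unique_ext (f g : R -> R) a b l1 l2 :
  (forall x, Rmin a b < x < Rmax a b -> f x = g x) ->
  is_RInt f a b l1 -> is_RInt g a b l2 -> l1 = l2.
Proof.
  intros Hfg H1 H2.
  apply (is_RInt_ext (V := R_NormedModule) f g) in H1; auto.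
  apply (is_RInt_unique (V := R_CompleteNormedModule)) in H1.
  apply (is_RInt_unique (V := R_CompleteNormedModule)) in H2. congruence.
Qed.

Lemma cube_bounds s : 0 <= s <= 1 -> 0 <= s^3 <= 1.
Proof.
  intros Hs. split; [apply pow_le; lra|].
  replace 1 with (1^3) by ring. apply pow_incr. lra.
Qed.

(** * The Euler weight and its moments *)

Definition weight (s : R) : R := sqrt (1 - s^3).

Lemma weight_bounds s : 0 <= s <= 1 -> 0 <= weight s <= 1.
Proof.
  intros Hs. assert (H3 := cube_bounds s Hs). split; [apply sqrt_pos|].
  rewrite <- sqrt_1. apply sqrt_le_1_alt. lra.
Qed.

Lemma continuous_weight s : continuous weight s.
Proof.
  apply continuous_sqrt_comp, continuous_of_ex_derive. auto_derive. auto.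
Qed.

Lemma ex_RInt_mul_weight (f : R -> R) :
  (forall s, 0 <= s <= 1 -> continuous f s) -> ex_RInt (fun s => f s * weight s) 0 1.
Proof.
  intros Hf. apply (ex_RInt_continuous (V := R_CompleteNormedModule)).
  rewrite Rmin_left, Rmax_right by lra. intros s Hs.
  apply (continuous_mult f weight); [now apply Hf | apply continuous_weight].
Qed.

Lemma is_RInt_mul_weight (f : R -> R) :
  (forall s, 0 <= s <= 1 -> continuous f s) ->
  is_RInt (fun s => f s * weight s) 0 1 (RInt (fun s => f s * weight s) 0 1).
Proof.
  intros Hf. apply (RInt_correct (V := R_CompleteNormedModule)). now apply ex_RInt_mul_weight.
Qed.

Lemma is_derive_weight_pow3_lt s :
  s < 1 -> is_derive (fun s => (1 - s^3) * weight s) s (-(9/2) * s^2 * weight s).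
Proof.
  intros Hs.
  assert (Hpos : 0 < 1 - s^3).
  { assert (s^3 < 1); [|lra].
    destruct (Rle_or_lt 0 s); [assert (s^3 <= s^2 * s) by nra|]; nra. }
  unfold weight. auto_derive.
  { replace (1 + - (s * (s * (s * 1)))) with (1 - s^3) by ring. lra. }
  replace (1 + - (s * (s * (s * 1)))) with (1 - s^3) by ring.
  assert (Hsq := sqrt_sqrt (1 - s^3) (Rlt_le _ _ Hpos)).
  assert (Hsqpos := sqrt_lt_R0 _ Hpos).
  set (S := sqrt (1 - s^3)) in *.
  apply Rmult_eq_reg_r with S; [|lra].
  field_simplify; [|lra]. replace (S^2) with (S * S) by ring. rewrite Hsq. field.
Qed.

(* At [s = 1] the difference quotient is [-(3 + 3h + h^2) * weight (1 + h)],
   which tends to [weight 1 = 0]. *)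
Lemma is_derive_weight_pow3_1 : is_derive (fun s => (1 - s^3) * weight s) 1 0.
Proof.
  apply is_derive_Reals. intros eps Heps.
  assert (Hc : continuity_pt weight 1).
  { apply continuity_pt_filterlim, continuous_weight. }
  destruct (Hc (eps / 7) ltac:(lra)) as [d [Hd Hw]].
  assert (Hd' : 0 < Rmin 1 d) by (apply Rmin_glb_lt; lra).
  exists (mkposreal _ Hd'). intros h Hh0 Hh. simpl in Hh.
  assert (Hh1 : Rabs h < 1) by (eapply Rlt_le_trans; [apply Hh | apply Rmin_l]).
  assert (Hhd : Rabs h < d) by (eapply Rlt_le_trans; [apply Hh | apply Rmin_r]).
  assert (Hw1 : weight 1 = 0) by (unfold weight; replace (1 - 1^3) with 0 by ring; apply sqrt_0).
  assert (Hwh : weight (1 + h) < eps / 7).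
  { assert (E := Hw (1 + h)). simpl in E. unfold R_dist in E. rewrite Hw1, Rminus_0_r in E.
    replace (1 + h - 1) with h in E by ring.
    assert (Rabs (weight (1 + h)) < eps / 7).
    { apply E. split; [|exact Hhd]. split; [exact I|]. intro; apply Hh0; lra. }
    apply Rabs_def2 in H. lra. }
  assert (Hwpos : 0 <= weight (1 + h)) by apply sqrt_pos.
  rewrite Hw1, !Rmult_0_r, !Rminus_0_r.
  replace ((1 - (1 + h)^3) * weight (1 + h) / h)
    with (-(3 + 3 * h + h^2) * weight (1 + h)) by (field; auto).
  rewrite Rabs_mult, (Rabs_right (weight _)) by lra.
  apply Rabs_def2 in Hh1.
  assert (Rabs (-(3 + 3 * h + h^2)) <= 7) by (apply Rabs_le; split; nra).
  assert (0 <= Rabs (-(3 + 3 * h + h^2))) by apply Rabs_pos.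
  nra.
Qed.

Lemma is_derive_weight_pow3 s :
  s <= 1 -> is_derive (fun s => (1 - s^3) * weight s) s (-(9/2) * s^2 * weight s).
Proof.
  intros Hs. destruct (Rle_lt_or_eq_dec _ _ Hs) as [Hlt | ->].
  - now apply is_derive_weight_pow3_lt.
  - eapply is_derive_eq; [apply is_derive_weight_pow3_1|].
    unfold weight. replace (1 - 1^3) with 0 by ring. rewrite sqrt_0. to_R. ring.
Qed.

(* Integration by parts against [(1 - s^3)^(3/2)], which vanishes at [s = 1]. *)
Lemma is_RInt_weight_by_parts (P P' : R -> R) :
  (forall s, 0 <= s <= 1 -> is_derive P s (P' s)) ->
  (forall s, 0 <= s <= 1 -> continuous P' s) ->
  is_RInt (fun s => (P' s * (1 - s^3) - 9/2 * s^2 * P s) * weight s) 0 1 (- P 0).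
Proof.
  intros HP HP'.
  assert (H := is_RInt_derive (fun s => P s * ((1 - s^3) * weight s))
     (fun s => P' s * ((1 - s^3) * weight s) + P s * (-(9/2) * s^2 * weight s)) 0 1).
  rewrite Rmin_left, Rmax_right in H by lra.
  replace (- P 0) with (minus (P 1 * ((1 - 1^3) * weight 1)) (P 0 * ((1 - 0^3) * weight 0))).
  2:{ unfold weight. replace (1 - 0^3) with 1 by ring. rewrite sqrt_1.
      to_R. ring. }
  eapply (is_RInt_ext (V := R_NormedModule)); [|apply H].
  - intros s _. cbv beta. to_R. ring.
  - intros s Hs. apply (is_derive_mult P (fun s => (1 - s^3) * weight s)).
    + now apply HP.
    + apply is_derive_weight_pow3. lra.
    + intros; apply Rmult_comm.
  - intros s Hs.
    assert (Hcw : continuous (fun s => (1 - s^3) * weight s) s).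
    { apply (continuous_mult (fun s => 1 - s^3) weight); [|apply continuous_weight].
      apply continuous_of_ex_derive. auto_derive. auto. }
    apply (continuous_plus (fun s => P' s * ((1 - s^3) * weight s))
                           (fun s => P s * (-(9/2) * s^2 * weight s))).
    + apply (continuous_mult P'); [now apply HP' | exact Hcw].
    + apply (continuous_mult P).
      * apply continuous_of_ex_derive. eexists. now apply HP.
      * apply (continuous_mult (fun s => -(9/2) * s^2) weight); [|apply continuous_weight].
        apply continuous_of_ex_derive. auto_derive. auto.
Qed.

Definition moment (n : nat) : R := RInt (fun s => s^(3 * n) * weight s) 0 1.

Lemma is_RInt_moment n : is_RInt (fun s => s^(3 * n) * weight s) 0 1 (moment n).
Proof.
  apply is_RInt_mul_weight. intros s _. apply continuous_of_ex_derive. auto_derive. auto.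
Qed.

Lemma moment_rec n : (3 * INR n + 11/2) * moment (S n) = (3 * INR n + 1) * moment n.
Proof.
  assert (Hparts := is_RInt_weight_by_parts (fun s => s^(3 * n + 1))
                                            (fun s => (3 * INR n + 1) * s^(3 * n))).
  assert (Hlin := is_RInt_minus _ _ 0 1 _ _
    (is_RInt_scal _ 0 1 (3 * INR n + 1) _ (is_RInt_moment n))
    (is_RInt_scal _ 0 1 (3 * INR n + 11/2) _ (is_RInt_moment (S n)))).
  assert (E : minus (scal (3 * INR n + 1) (moment n)) (scal (3 * INR n + 11/2) (moment (S n)))
              = - 0^(3 * n + 1)).
  { eapply is_RInt_unique_ext; [| apply Hlin | apply Hparts].
    - intros s _. replace (3 * S n)%nat with (3 * n + 3)%nat by lia.
      replace (3 * n + 1)%nat with (S (3 * n)) by lia.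
      rewrite pow_add. cbv beta. to_R. simpl pow. field.
    - intros s _. eapply is_derive_eq.
      { apply (is_derive_pow (fun s => s) (3 * n + 1) s 1 (is_derive_id s)). }
      replace (Init.Nat.pred (3 * n + 1)) with (3 * n)%nat by lia.
      rewrite plus_INR, mult_INR. simpl INR. to_R. ring.
    - intros s _. apply continuous_of_ex_derive. auto_derive. auto. }
  rewrite pow_i in E by lia. to_R in E. lra.
Qed.

Lemma moment0_pos : 0 < moment 0.
Proof.
  apply RInt_gt_0; [lra | |].
  - intros s Hs. rewrite Rmult_1_l. apply sqrt_lt_R0.
    assert (s^2 < 1) by nra. assert (s^3 < 1) by nra. lra.
  - intros s _. apply (continuous_mult (fun s => s^(3 * 0)) weight); [|apply continuous_weight].
    apply continuous_of_ex_derive. auto_derive. auto.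
Qed.

Lemma poch_pos c n : 0 < c -> 0 < poch c n.
Proof.
  intros Hc. induction n; simpl; [lra|].
  apply Rmult_lt_0_compat; [auto | assert (0 <= INR n) by apply pos_INR; lra].
Qed.

Lemma poch_1 n : poch 1 n = INR (fact n).
Proof.
  induction n; [reflexivity|].
  cbn [poch]. rewrite IHn. change (fact (S n)) with (S n * fact n)%nat.
  rewrite mult_INR, S_INR. ring.
Qed.

Lemma moment_poch n : moment n * poch (11/6) n = moment 0 * poch (1/3) n.
Proof.
  induction n as [|n IH]; [simpl; ring|].
  assert (Hn := pos_INR n). assert (Hrec := moment_rec n). cbn [poch].
  replace (moment (S n) * (poch (11/6) n * (11/6 + INR n)))
    with ((3 * INR n + 11/2) * moment (S n) * poch (11/6) n / 3) by field.
  rewrite Hrec.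
  replace ((3 * INR n + 1) * moment n * poch (11/6) n / 3)
    with ((1/3 + INR n) * (moment n * poch (11/6) n)) by field.
  rewrite IH. ring.
Qed.

Lemma hyp_coef_moment n : hyp_coef 1 (1/3) (11/6) n = moment n / moment 0.
Proof.
  assert (H0 := moment0_pos). assert (Hp := poch_pos (11/6) n ltac:(lra)).
  assert (Hf := INR_fact_neq_0 n).
  unfold hyp_coef. rewrite poch_1.
  replace (moment n) with (moment 0 * poch (1/3) n / poch (11/6) n)
    by (rewrite <- moment_poch; field; lra).
  field. repeat split; lra.
Qed.

(** * The Euler integral and its local power series *)

Definition euler_integral (x : R) : R := RInt (fun s => / (1 - x * s^3) * weight s) 0 1.

Definition euler_taylor_coef (x0 : R) (k : nat) : R :=
  RInt (fun s => s^(3 * k) / (1 - x0 * s^3)^(S k) * weight s) 0 1.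

(* Expanding [1 / (1 - (x0 + h) s^3)] as a geometric series in
   [r = h s^3 / (1 - x0 s^3)], uniformly in [s] because [|r| <= q < 1]. *)
Section Geometric_expansion.

Variables (x0 h q mu : R).
Hypothesis Hq : 0 <= q < 1.
Hypothesis Hmu : 0 < mu.
Hypothesis Hden : forall s, 0 <= s <= 1 -> mu <= 1 - x0 * s^3.
Hypothesis Hratio : forall s, 0 <= s <= 1 -> Rabs h * s^3 <= q * (1 - x0 * s^3).

(* [sum_(k <= N) h^k s^(3k) / (1 - x0 s^3)^(k+1)] in closed form. *)
Definition partial_kernel (N : nat) (s : R) : R :=
  (1 - (h * s^3 / (1 - x0 * s^3))^(S N)) / (1 - x0 * s^3 - h * s^3).

Lemma shifted_den_lower_bound s : 0 <= s <= 1 -> (1 - q) * mu <= 1 - x0 * s^3 - h * s^3.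
Proof.
  intros Hs. specialize (Hden s Hs). specialize (Hratio s Hs).
  assert (H3 := cube_bounds s Hs).
  assert (h * s^3 <= Rabs h * s^3) by (apply Rmult_le_compat_r; [lra | apply Rle_abs]).
  nra.
Qed.

Let den_pos : 0 < (1 - q) * mu.
Proof. apply Rmult_lt_0_compat; lra. Qed.

Lemma ex_RInt_partial_kernel N : ex_RInt (fun s => partial_kernel N s * weight s) 0 1.
Proof.
  apply ex_RInt_mul_weight. intros s Hs. apply continuous_of_ex_derive.
  assert (H1 := Hden s Hs). assert (H2 := shifted_den_lower_bound s Hs).
  unfold partial_kernel. auto_derive. simpl. split; [lra | split; [lra | auto]].
Qed.

Lemma ex_RInt_taylor_integrand k :
  ex_RInt (fun s => s^(3 * k) / (1 - x0 * s^3)^(S k) * weight s) 0 1.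
Proof.
  apply ex_RInt_mul_weight. intros s Hs. apply continuous_of_ex_derive.
  assert (H1 := Hden s Hs). auto_derive.
  intro E. apply (pow_nonzero (1 - x0 * s^3) (S k)); [lra|]. rewrite <- E. reflexivity.
Qed.

Lemma partial_kernel_S N s : 0 <= s <= 1 ->
  partial_kernel (S N) s = partial_kernel N s + h^(S N) * (s^(3 * S N) / (1 - x0 * s^3)^(S (S N))).
Proof.
  intros Hs. assert (H1 := Hden s Hs). assert (H2 := shifted_den_lower_bound s Hs).
  unfold partial_kernel. set (D := 1 - x0 * s^3) in *.
  assert (HD := pow_nonzero D (S N) ltac:(lra)).
  change ((h * s^3 / D)^(S (S N))) with (h * s^3 / D * (h * s^3 / D)^(S N)).
  change (D^(S (S N))) with (D * D^(S N)).
  rewrite pow_mult. unfold Rdiv. rewrite !Rpow_mult_distr, pow_inv.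
  field. split; [exact HD | split; lra].
Qed.

Lemma sum_n_taylor_coef N :
  sum_n (fun k => scal (pow_n h k) (euler_taylor_coef x0 k)) N
  = RInt (fun s => partial_kernel N s * weight s) 0 1.
Proof.
  induction N as [|N IH].
  - rewrite sum_O, pow_n_pow. unfold euler_taylor_coef. simpl pow. rewrite Rmult_1_l.
    apply RInt_ext. rewrite Rmin_left, Rmax_right by lra. intros s Hs.
    assert (H1 := Hden s ltac:(lra)). assert (H2 := shifted_den_lower_bound s ltac:(lra)).
    unfold partial_kernel. simpl pow. to_R. field. lra.
  - rewrite sum_Sn, IH, pow_n_pow.
    to_R. unfold euler_taylor_coef.
    rewrite <- (RInt_scal (V := R_CompleteNormedModule)) by apply ex_RInt_taylor_integrand.
    rewrite <- (RInt_plus (V := R_CompleteNormedModule)).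
    + apply RInt_ext. rewrite Rmin_left, Rmax_right by lra. intros s Hs.
      rewrite partial_kernel_S by lra.
      to_R. ring.
    + apply ex_RInt_partial_kernel.
    + apply (ex_RInt_scal (V := R_CompleteNormedModule)). apply ex_RInt_taylor_integrand.
Qed.

Lemma partial_kernel_remainder_bound N s : 0 <= s <= 1 ->
  Rabs (/ (1 - (x0 + h) * s^3) - partial_kernel N s) <= q^(S N) / ((1 - q) * mu).
Proof.
  intros Hs. assert (H1 := Hden s Hs). assert (H2 := shifted_den_lower_bound s Hs).
  assert (H3 := Hratio s Hs).
  set (r := h * s^3 / (1 - x0 * s^3)).
  replace (/ (1 - (x0 + h) * s^3) - partial_kernel N s) with (r^(S N) / (1 - x0 * s^3 - h * s^3))
    by (unfold partial_kernel, r; field; lra).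
  assert (Hr : Rabs r <= q).
  { unfold r. rewrite Rabs_div, Rabs_mult by lra.
    rewrite (Rabs_right (s^3)) by (apply Rle_ge, cube_bounds; auto).
    rewrite (Rabs_right (1 - x0 * s^3)) by lra.
    apply Rmult_le_reg_r with (1 - x0 * s^3); [lra|].
    unfold Rdiv. rewrite Rmult_assoc, Rinv_l by lra. lra. }
  rewrite Rabs_div, <- RPow_abs, (Rabs_right (1 - x0 * s^3 - h * s^3)) by lra.
  unfold Rdiv. apply Rmult_le_compat.
  - apply pow_le, Rabs_pos.
  - left. apply Rinv_0_lt_compat. lra.
  - apply pow_incr. split; [apply Rabs_pos | exact Hr].
  - apply Rinv_le_contravar; lra.
Qed.

Lemma euler_integral_partial_kernel_bound N :
  Rabs (euler_integral (x0 + h) - RInt (fun s => partial_kernel N s * weight s) 0 1)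
  <= q^(S N) / ((1 - q) * mu).
Proof.
  assert (Hex : ex_RInt (fun s => / (1 - (x0 + h) * s^3) * weight s) 0 1).
  { apply ex_RInt_mul_weight. intros s Hs. apply continuous_of_ex_derive.
    assert (H2 := shifted_den_lower_bound s Hs). auto_derive. simpl. lra. }
  unfold euler_integral.
  rewrite <- (RInt_minus (V := R_CompleteNormedModule)) by (auto; apply ex_RInt_partial_kernel).
  replace (q^(S N) / ((1 - q) * mu)) with ((1 - 0) * (q^(S N) / ((1 - q) * mu))) by ring.
  apply abs_RInt_le_const; [lra | |].
  { apply (ex_RInt_minus (V := R_CompleteNormedModule)); auto. apply ex_RInt_partial_kernel. }
  intros s Hs. to_R. assert (Hw := weight_bounds s Hs).
  assert (Hb := partial_kernel_remainder_bound N s Hs).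
  replace (/ (1 - (x0 + h) * s^3) * weight s - partial_kernel N s * weight s)
    with ((/ (1 - (x0 + h) * s^3) - partial_kernel N s) * weight s) by ring.
  rewrite Rabs_mult, (Rabs_right (weight s)) by lra.
  assert (0 <= Rabs (/ (1 - (x0 + h) * s^3) - partial_kernel N s)) by apply Rabs_pos.
  nra.
Qed.

Lemma is_pseries_euler_integral : is_pseries (euler_taylor_coef x0) h (euler_integral (x0 + h)).
Proof.
  set (K := / ((1 - q) * mu)).
  assert (HK : 0 < K) by (apply Rinv_0_lt_compat; lra).
  assert (Hgeom : is_lim_seq (fun N => K * q * q^N) 0).
  { replace (Finite 0) with (Rbar_mult (K * q) 0) by (simpl; f_equal; ring).
    apply is_lim_seq_scal_l, is_lim_seq_geom. rewrite Rabs_right; lra. }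
  enough (Hlim : is_lim_seq (sum_n (fun k => scal (pow_n h k) (euler_taylor_coef x0 k)))
                            (euler_integral (x0 + h))) by exact Hlim.
  apply (is_lim_seq_ext
    (fun N => euler_integral (x0 + h)
              - (euler_integral (x0 + h) - RInt (fun s => partial_kernel N s * weight s) 0 1))).
  { intros N. rewrite sum_n_taylor_coef. ring. }
  replace (Finite (euler_integral (x0 + h)))
    with (Finite (euler_integral (x0 + h) - 0)) by (f_equal; ring).
  apply is_lim_seq_minus'; [apply is_lim_seq_const|].
  apply is_lim_seq_le_le with (fun N => - (K * q * q^N)) (fun N => K * q * q^N).
  - intros N. assert (B := euler_integral_partial_kernel_bound N).
    apply Rabs_le_between in B. simpl pow in B. unfold K. unfold Rdiv in B. split; lra.
  - replace (Finite 0) with (Rbar_opp 0) by (simpl; f_equal; ring).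
    now apply (is_lim_seq_opp (fun N => K * q * q^N)).
  - exact Hgeom.
Qed.

End Geometric_expansion.

(** * Real-analytic functions *)

Definition analytic_at (f : R -> R) (x0 : R) : Prop :=
  exists r : R, 0 < r /\ exists an : nat -> R,
    forall y, Rabs (y - x0) < r -> is_pseries an (y - x0) (f y).

Lemma CV_radius_ge (a : nat -> R) (r : R) :
  (forall h, Rabs h < r -> ex_pseries a h) -> Rbar_le r (CV_radius a).
Proof.
  intros Hex. apply Rbar_not_lt_le. intros Hlt.
  assert (H0 := CV_radius_ge_0 a).
  destruct (CV_radius a) as [rho| |] eqn:Erad; simpl in Hlt, H0; try contradiction.
  set (x := (rho + r) / 2).
  assert (Hx : 0 <= x) by (unfold x; lra).
  apply (CV_disk_outside a x); [rewrite Erad, Rabs_right; simpl; unfold x; lra|].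
  apply (is_lim_seq_ext (fun n => scal (pow_n x n) (a n))).
  { intros n. rewrite pow_n_pow. apply Rmult_comm. }
  apply ex_series_lim_0, Hex. rewrite Rabs_right; unfold x; lra.
Qed.

Lemma is_derive_of_local_PSeries (f : R -> R) (y r : R) (a : nat -> R) :
  (forall h, Rabs h < r -> ex_pseries a h) ->
  (forall h, Rabs h < r -> f (y + h) = PSeries a h) ->
  forall h, Rabs h < r -> is_derive f (y + h) (PSeries (PS_derive a) h).
Proof.
  intros Hex Hf h Hh.
  assert (Hrad : Rbar_lt (Rabs h) (CV_radius a)).
  { apply Rbar_lt_le_trans with (Finite r); [exact Hh | now apply CV_radius_ge]. }
  apply (is_derive_ext_loc (fun t => PSeries a (t - y))).
  - apply (locally_R _ (r - Rabs h)); [lra|]. intros t Ht.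
    replace t with (y + (t - y)) at 2 by ring. symmetry. apply Hf.
    replace (t - y) with ((t - (y + h)) + h) by ring.
    eapply Rle_lt_trans; [apply Rabs_triang | lra].
  - eapply is_derive_eq.
    + apply (is_derive_comp (PSeries a) (fun t => t - y) (y + h) (PSeries (PS_derive a) h) 1).
      * replace (y + h - y) with h by ring. now apply is_derive_PSeries.
      * apply (is_derive_eq _ _ _ _ (is_derive_minus (fun t => t) (fun _ => y) (y + h) 1 0
                 (is_derive_id _) (is_derive_const _ _))).
        to_R. ring.
    + to_R. ring.
Qed.

Lemma continuous_zero_on_right (g : R -> R) (x d : R) :
  continuity_pt g x -> 0 < d -> (forall y, x < y < x + d -> g y = 0) -> g x = 0.
Proof.
  intros Hc Hd Hz. destruct (Req_dec (g x) 0) as [E|E]; auto.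
  exfalso. assert (He : 0 < Rabs (g x)) by (apply Rabs_pos_lt; auto).
  destruct (Hc (Rabs (g x)) He) as [al [Hal Hg]].
  set (y := x + Rmin (al / 2) (d / 2)).
  assert (Hy : 0 < Rmin (al / 2) (d / 2)) by (apply Rmin_glb_lt; lra).
  assert (Hy1 := Rmin_l (al / 2) (d / 2)). assert (Hy2 := Rmin_r (al / 2) (d / 2)).
  specialize (Hg y). simpl in Hg. unfold R_dist in Hg.
  rewrite Hz in Hg by (unfold y; lra).
  rewrite Rminus_0_l, Rabs_Ropp in Hg.
  assert (Rabs (g x) < Rabs (g x)); [|lra].
  apply Hg. split; [split; [exact I | unfold y; lra]|].
  unfold y. replace (x + Rmin (al / 2) (d / 2) - x) with (Rmin (al / 2) (d / 2)) by ring.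
  rewrite Rabs_right; lra.
Qed.

(* Each derivative of the sum is a power series continuous at [0], and it
   vanishes to the right of [0], so its value [a n * n!] at [0] is zero. *)
Lemma PSeries_coef_zero_of_zero_right (a : nat -> R) (d : R) :
  Rbar_lt 0 (CV_radius a) -> 0 < d -> (forall h, 0 < h < d -> PSeries a h = 0) ->
  forall n, a n = 0.
Proof.
  intros Hrad Hd Hz n.
  assert (Hrho : exists rho, 0 < rho /\ forall h, Rabs h < rho -> Rbar_lt (Rabs h) (CV_radius a)).
  { destruct (CV_radius a) as [R0| |]; simpl in Hrad; try contradiction.
    - exists R0. split; auto.
    - exists 1. split; [lra | now intros]. }
  destruct Hrho as [rho [Hrho Hin]].
  assert (Hcoef := Derive_n_coef a n Hrad).
  assert (Hfact := INR_fact_neq_0 n).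
  enough (Derive_n (PSeries a) n 0 = 0) by (rewrite Hcoef in H; nra).
  rewrite Derive_n_PSeries by (rewrite Rabs_R0; exact Hrad).
  apply (continuous_zero_on_right _ 0 (Rmin rho d)).
  - apply PSeries_continuity. rewrite CV_radius_derive_n, Rabs_R0. exact Hrad.
  - now apply Rmin_glb_lt.
  - intros h Hh. rewrite Rplus_0_l in Hh.
    assert (Hh1 := Rmin_l rho d). assert (Hh2 := Rmin_r rho d).
    rewrite <- Derive_n_PSeries by (apply Hin; rewrite Rabs_right; lra).
    assert (Hloc : locally h (fun t => PSeries a t = 0)).
    { apply (locally_R _ (Rmin h (Rmin rho d - h))); [apply Rmin_glb_lt; lra|]. intros t Ht.
      assert (Ht1 := Rmin_l h (Rmin rho d - h)). assert (Ht2 := Rmin_r h (Rmin rho d - h)).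
      apply Rabs_def2 in Ht. apply Hz. lra. }
    rewrite (Derive_n_ext_loc _ (fun _ => 0) n h Hloc).
    destruct n; [reflexivity | apply Derive_n_const].
Qed.

Lemma analytic_at_minus (f g : R -> R) x0 :
  analytic_at f x0 -> analytic_at g x0 -> analytic_at (fun y => f y - g y) x0.
Proof.
  intros [r1 [Hr1 [a1 Ha1]]] [r2 [Hr2 [a2 Ha2]]].
  exists (Rmin r1 r2). split; [now apply Rmin_glb_lt|].
  exists (PS_minus a1 a2). intros y Hy.
  apply (is_pseries_minus a1 a2 (y - x0) (f y) (g y)).
  - apply Ha1. eapply Rlt_le_trans; [apply Hy | apply Rmin_l].
  - apply Ha2. eapply Rlt_le_trans; [apply Hy | apply Rmin_r].
Qed.

Lemma analytic_zero_on_right_ball (D : R -> R) (x0 d : R) :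
  analytic_at D x0 -> 0 < d -> (forall y, x0 < y < x0 + d -> D y = 0) ->
  exists r, 0 < r /\ forall y, Rabs (y - x0) < r -> D y = 0.
Proof.
  intros [r [Hr [an Han]]] Hd Hzero. exists r. split; [exact Hr|].
  assert (Hser : forall h, Rabs h < r -> is_pseries an h (D (x0 + h))).
  { intros h Hh. assert (E := Han (x0 + h)).
    replace (x0 + h - x0) with h in E by ring. now apply E. }
  assert (Hcoef : forall n, an n = 0).
  { apply (PSeries_coef_zero_of_zero_right an (Rmin r d)).
    - apply Rbar_lt_le_trans with (Finite r); [exact Hr|].
      apply CV_radius_ge. intros h Hh. eexists. now apply Hser.
    - now apply Rmin_glb_lt.
    - intros h Hh. assert (Hh1 := Rmin_l r d). assert (Hh2 := Rmin_r r d).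
      rewrite (is_pseries_unique _ _ _ (Hser h ltac:(rewrite Rabs_right; lra))).
      apply Hzero. lra. }
  intros y Hy. replace y with (x0 + (y - x0)) by ring.
  rewrite <- (is_pseries_unique _ _ _ (Hser (y - x0) Hy)).
  rewrite (PSeries_ext an (fun _ => 0)) by auto. apply PSeries_const_0.
Qed.

(* Identity theorem on [(-oo, b)]: the infimum of the points down to which
   [D] vanishes cannot lie in [(-oo, b)], since [D] is analytic there. *)
Lemma analytic_zero_extend_left (D : R -> R) (c b : R) :
  c < b -> (forall y, y < b -> analytic_at D y) ->
  (forall y, c < y < b -> D y = 0) -> forall y, y < b -> D y = 0.
Proof.
  intros Hcb Han Hzero.
  set (m := (c + b) / 2).
  enough (Hleft : forall y0, y0 <= m -> D y0 = 0).
  { intros y Hy. destruct (Rle_or_lt y m); [now apply Hleft | apply Hzero; unfold m in *; lra]. }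
  intros y0 Hy0. destruct (Req_dec (D y0) 0) as [E|Hne]; auto. exfalso.
  set (E := fun M => 0 <= M /\ forall y, m - M < y <= m -> D y = 0).
  assert (Hbound : bound E).
  { exists (m - y0). intros M [HM HMy]. apply Rnot_lt_le. intros Hlt.
    apply Hne, HMy. lra. }
  assert (HE0 : E ((b - c) / 2)).
  { split; [lra|]. intros y Hy. apply Hzero. unfold m in Hy. lra. }
  destruct (completeness E Hbound (ex_intro _ _ HE0)) as [L [HLub HLlub]].
  assert (HL : (b - c) / 2 <= L) by (now apply HLub).
  assert (Hin : forall y, m - L < y <= m -> D y = 0).
  { intros y Hy. destruct (classic (exists M, E M /\ m - y < M)) as [[M [HM HMy]]|Hno].
    - apply (proj2 HM). lra.
    - exfalso. assert (L <= m - y); [|lra].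
      apply HLlub. intros M HM. apply Rnot_lt_le. intros Hlt. apply Hno. now exists M. }
  destruct (analytic_zero_on_right_ball D (m - L) L) as [r [Hr Hball]].
  - apply Han. unfold m in *. lra.
  - lra.
  - intros y Hy. apply Hin. lra.
  - assert (HE : E (L + r / 2)).
    { split; [lra|]. intros y Hy. destruct (Rlt_or_le (m - L) y); [apply Hin; lra|].
      apply Hball. rewrite Rabs_left1 by lra. lra. }
    assert (L + r / 2 <= L) by (now apply HLub). lra.
Qed.

(** * The hypergeometric function as a normalised Euler integral *)

Definition euler_2F1 (x : R) : R := euler_integral x / moment 0.

Definition taylor_radius (x0 : R) : R := Rmin 1 (1 - x0) / 2.

Lemma taylor_radius_pos x0 : x0 < 1 -> 0 < taylor_radius x0.
Proof.
  intros. unfold taylor_radius. assert (0 < Rmin 1 (1 - x0)) by (apply Rmin_glb_lt; lra). lra.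
Qed.

Lemma taylor_radius_le x0 : x0 < 1 -> taylor_radius x0 <= (1 - x0) / 2.
Proof. intros. unfold taylor_radius. assert (Rmin 1 (1 - x0) <= 1 - x0) by apply Rmin_r. lra. Qed.

Lemma euler_den_lower_bound x0 s : x0 < 1 -> 0 <= s <= 1 -> Rmin 1 (1 - x0) <= 1 - x0 * s^3.
Proof.
  intros Hx Hs. assert (H3 := cube_bounds s Hs).
  destruct (Rle_or_lt x0 0).
  - apply Rle_trans with 1; [apply Rmin_l | nra].
  - apply Rle_trans with (1 - x0); [apply Rmin_r | nra].
Qed.

Lemma is_pseries_euler_integral_at x0 : x0 < 1 -> forall h, Rabs h < taylor_radius x0 ->
  is_pseries (euler_taylor_coef x0) h (euler_integral (x0 + h)).
Proof.
  intros Hx h Hh. unfold taylor_radius in Hh.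
  assert (Hmu : 0 < Rmin 1 (1 - x0)) by (apply Rmin_glb_lt; lra).
  apply (is_pseries_euler_integral x0 h (1/2) (Rmin 1 (1 - x0))); try lra.
  - intros s Hs. now apply euler_den_lower_bound.
  - intros s Hs. assert (H3 := cube_bounds s Hs). assert (H4 := euler_den_lower_bound x0 s Hx Hs).
    assert (0 <= Rabs h) by apply Rabs_pos. nra.
Qed.

Lemma euler_taylor_coef_0 k : euler_taylor_coef 0 k = moment k.
Proof.
  apply RInt_ext. intros s _.
  replace (1 - 0 * s^3) with 1 by ring. rewrite pow1. to_R. field.
Qed.

Lemma euler_2F1_series x : -1 < x < 1 -> euler_2F1 x = PSeries (hyp_coef 1 (1/3) (11/6)) x.
Proof.
  intros Hx. assert (H0 := moment0_pos).
  assert (E : is_pseries (euler_taylor_coef 0) x (euler_integral (0 + x))).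
  { apply (is_pseries_euler_integral 0 x (Rabs x) 1); try lra.
    - split; [apply Rabs_pos | apply Rabs_def1; lra].
    - intros s Hs. lra.
    - intros s Hs. assert (H3 := cube_bounds s Hs). assert (0 <= Rabs x) by apply Rabs_pos. nra. }
  rewrite Rplus_0_l in E.
  rewrite (PSeries_ext _ (PS_scal (/ moment 0) (euler_taylor_coef 0))).
  - rewrite PSeries_scal, (is_pseries_unique _ _ _ E). unfold euler_2F1. field. lra.
  - intros n. rewrite hyp_coef_moment. unfold PS_scal. rewrite euler_taylor_coef_0.
    to_R. field. lra.
Qed.

Lemma is_2F1_continuation_euler : is_2F1_continuation 1 (1/3) (11/6) euler_2F1.
Proof.
  split; [exact euler_2F1_series|].
  intros x0 Hx0. exists (taylor_radius x0). split; [now apply taylor_radius_pos|].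
  exists (PS_scal (/ moment 0) (euler_taylor_coef x0)). intros y Hy.
  assert (E := is_pseries_euler_integral_at x0 Hx0 (y - x0) Hy).
  replace (x0 + (y - x0)) with y in E by ring.
  apply (is_pseries_scal (/ moment 0)) in E; [|apply Rmult_comm].
  to_R in E.
  unfold euler_2F1. rewrite Rmult_comm in E. exact E.
Qed.

Lemma is_2F1_continuation_unique (a b c : R) (F G : R -> R) :
  is_2F1_continuation a b c F -> is_2F1_continuation a b c G -> forall y, y < 1 -> F y = G y.
Proof.
  intros [F1 F2] [G1 G2] y Hy. apply Rminus_diag_uniq.
  apply (analytic_zero_extend_left (fun y => F y - G y) (-1) 1); auto; [lra | |].
  - intros x0 Hx0. apply analytic_at_minus; [now apply F2 | now apply G2].
  - intros z Hz. rewrite F1, G1 by auto. ring.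
Qed.

Lemma hyp2F1_euler y : y < 1 -> hyp2F1 1 (1/3) (11/6) y = euler_2F1 y.
Proof.
  apply is_2F1_continuation_unique with 1 (1/3) (11/6); [|exact is_2F1_continuation_euler].
  unfold hyp2F1. apply epsilon_spec. exists euler_2F1. exact is_2F1_continuation_euler.
Qed.

(** * Derivatives and the hypergeometric equation *)

Lemma is_derive_euler_integral_at y : y < 1 -> forall h, Rabs h < taylor_radius y ->
  is_derive euler_integral (y + h) (PSeries (PS_derive (euler_taylor_coef y)) h).
Proof.
  intros Hy. apply is_derive_of_local_PSeries.
  - intros h Hh. eexists. now apply is_pseries_euler_integral_at.
  - intros h Hh. symmetry. apply is_pseries_unique. now apply is_pseries_euler_integral_at.
Qed.

Lemma is_derive_euler_integral y : y < 1 -> is_derive euler_integral y (euler_taylor_coef y 1).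
Proof.
  intros Hy.
  assert (E := is_derive_euler_integral_at y Hy 0
                 ltac:(rewrite Rabs_R0; now apply taylor_radius_pos)).
  rewrite Rplus_0_r, PSeries_0 in E. unfold PS_derive in E. simpl INR in E.
  now rewrite Rmult_1_l in E.
Qed.

Lemma is_derive_euler_taylor_coef_1 y :
  y < 1 -> is_derive (fun x => euler_taylor_coef x 1) y (2 * euler_taylor_coef y 2).
Proof.
  intros Hy. assert (Hr := taylor_radius_pos y Hy). assert (Hr_le := taylor_radius_le y Hy).
  assert (Hex : forall h, Rabs h < taylor_radius y ->
                         ex_pseries (PS_derive (euler_taylor_coef y)) h).
  { intros h Hh. apply ex_pseries_derive.
    apply Rbar_lt_le_trans with (Finite (taylor_radius y)); [exact Hh|].
    apply CV_radius_ge. intros h' Hh'. eexists. now apply is_pseries_euler_integral_at. }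
  assert (Hcoef : forall h, Rabs h < taylor_radius y ->
                    euler_taylor_coef (y + h) 1 = PSeries (PS_derive (euler_taylor_coef y)) h).
  { intros h Hh. assert (y + h < 1) by (apply Rabs_def2 in Hh; lra).
    transitivity (Derive euler_integral (y + h)); [symmetry|];
      apply is_derive_unique;
      [now apply is_derive_euler_integral | now apply is_derive_euler_integral_at]. }
  assert (E := is_derive_of_local_PSeries (fun x => euler_taylor_coef x 1) y (taylor_radius y)
                 _ Hex Hcoef 0 ltac:(rewrite Rabs_R0; lra)).
  rewrite Rplus_0_r, PSeries_0 in E. unfold PS_derive in E. simpl INR in E.
  eapply is_derive_eq; [exact E|]. to_R. ring.
Qed.

Lemma euler_den_pos y s : y < 1 -> 0 <= s <= 1 -> 0 < 1 - y * s^3.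
Proof.
  intros Hy Hs. assert (H := euler_den_lower_bound y s Hy Hs).
  assert (0 < Rmin 1 (1 - y)) by (apply Rmin_glb_lt; lra). lra.
Qed.

Lemma is_RInt_euler_taylor_coef y k : y < 1 ->
  is_RInt (fun s => s^(3 * k) / (1 - y * s^3)^(S k) * weight s) 0 1 (euler_taylor_coef y k).
Proof.
  intros Hy. apply is_RInt_mul_weight. intros s Hs.
  assert (HD := euler_den_pos y s Hy Hs). apply continuous_of_ex_derive. auto_derive.
  intro E. apply (pow_nonzero (1 - y * s^3) (S k)); [lra|]. rewrite <- E. reflexivity.
Qed.

Lemma euler_integral_taylor_coef_0 y : y < 1 -> euler_integral y = euler_taylor_coef y 0.
Proof.
  intros Hy. apply RInt_ext. intros s Hs. rewrite Rmin_left, Rmax_right in Hs by lra.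
  assert (HD := euler_den_pos y s Hy ltac:(lra)). simpl pow. to_R. field. simpl in HD. lra.
Qed.

(* The integrand of the left-hand side is [-1/3] times the by-parts
   integrand of [P s = s / (1 - y s^3)^2], whose boundary term [P 0] is [0]. *)
Lemma euler_integral_hyp_ode y : y < 1 ->
  y * (1 - y) * (2 * euler_taylor_coef y 2) + (11/6 - 7/3 * y) * euler_taylor_coef y 1
  - euler_integral y / 3 = 0.
Proof.
  intros Hy.
  assert (Hnorm : forall s, 1 + - (y * (s * (s * (s * 1)))) = 1 - y * s^3) by (intros; ring).
  assert (Hparts := is_RInt_weight_by_parts (fun s => s / (1 - y * s^3)^2)
                      (fun s => / (1 - y * s^3)^2 + 6 * y * s^3 / (1 - y * s^3)^3)).
  specialize (Hparts ltac:(intros s Hs; assert (HD := euler_den_pos y s Hy Hs);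
                           auto_derive; rewrite ?Hnorm; [nonzero | simpl; to_R; field; lra])).
  specialize (Hparts ltac:(intros s Hs; assert (HD := euler_den_pos y s Hy Hs);
                           apply continuous_of_ex_derive;
                           auto_derive; rewrite ?Hnorm; repeat split; nonzero)).
  assert (Hlin := is_RInt_plus _ _ 0 1 _ _
    (is_RInt_plus _ _ 0 1 _ _
       (is_RInt_scal _ 0 1 (2 * (y * (1 - y))) _ (is_RInt_euler_taylor_coef y 2 Hy))
       (is_RInt_scal _ 0 1 (11/6 - 7/3 * y) _ (is_RInt_euler_taylor_coef y 1 Hy)))
    (is_RInt_scal _ 0 1 (-(1/3)) _ (is_RInt_euler_taylor_coef y 0 Hy))).
  refine (_ (is_RInt_unique_ext _ _ 0 1 _ _ _ Hlin (is_RInt_scal _ 0 1 (-(1/3)) _ Hparts))).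
  - intros E. to_R in E. cbv beta in E. rewrite <- euler_integral_taylor_coef_0 in E by exact Hy.
    replace (0 / (1 - y * 0^3)^2) with 0 in E by (unfold Rdiv; ring). lra.
  - intros s Hs. rewrite Rmin_left, Rmax_right in Hs by lra.
    assert (HD := euler_den_pos y s Hy ltac:(lra)). cbv beta. to_R. simpl pow. field. lra.
Qed.

Local Notation F := (hyp2F1 1 (1/3) (11/6)).

Definition dF (y : R) : R := euler_taylor_coef y 1 / moment 0.
Definition d2F (y : R) : R := 2 * euler_taylor_coef y 2 / moment 0.

Lemma is_derive_hyp2F1 y : y < 1 -> is_derive F y (dF y).
Proof.
  intros Hy. assert (H0 := moment0_pos).
  apply (is_derive_ext_loc euler_2F1).
  - apply (locally_R _ (1 - y)); [lra|]. intros t Ht.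
    symmetry. apply hyp2F1_euler. apply Rabs_def2 in Ht. lra.
  - unfold euler_2F1, dF.
    apply (is_derive_eq _ _ _ _ (is_derive_scal_l euler_integral y _ (/ moment 0)
             (is_derive_euler_integral y Hy))).
    to_R. field. lra.
Qed.

Lemma is_derive_dF y : y < 1 -> is_derive dF y (d2F y).
Proof.
  intros Hy. assert (H0 := moment0_pos). unfold dF, d2F.
  apply (is_derive_eq _ _ _ _ (is_derive_scal_l (fun x => euler_taylor_coef x 1) y _ (/ moment 0)
           (is_derive_euler_taylor_coef_1 y Hy))).
  to_R. field. lra.
Qed.

Lemma hyp2F1_ode y : y < 1 -> y * (1 - y) * d2F y + (11/6 - 7/3 * y) * dF y - F y / 3 = 0.
Proof.
  intros Hy. assert (H0 := moment0_pos). assert (E := euler_integral_hyp_ode y Hy).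
  rewrite hyp2F1_euler by auto. unfold d2F, dF, euler_2F1.
  apply Rmult_eq_reg_r with (moment 0); [|lra].
  rewrite Rmult_0_l, <- E. field. lra.
Qed.

Lemma hyp2F1_0 : F 0 = 1.
Proof.
  rewrite hyp2F1_euler, euler_2F1_series by lra. rewrite PSeries_0.
  unfold hyp_coef. simpl. field.
Qed.

Lemma hyp2F1_near_0 : exists d, 0 < d /\ forall t, -d < t < 0 -> 1/2 < F t < 3/2.
Proof.
  assert (Hc : continuity_pt F 0).
  { apply continuity_pt_filterlim, continuous_of_ex_derive. eexists. apply is_derive_hyp2F1. lra. }
  destruct (Hc (1/2) ltac:(lra)) as [d [Hd Hcl]]. exists d. split; [exact Hd|].
  intros t Ht. assert (E := Hcl t). simpl in E. unfold R_dist in E. rewrite hyp2F1_0 in E.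
  assert (Rabs (F t - 1) < 1/2).
  { apply E. split; [split; [exact I | lra] | rewrite Rminus_0_r, Rabs_left; lra]. }
  apply Rabs_def2 in H. lra.
Qed.

(** * The density-contrast equation *)

Definition ode_lhs (alpha y d dd z : R) : R :=
  (1 + z) ^ 2 * dd
  + / 2 * (1 + z) * ((alpha * (1 + z) ^ 3 - 2) / (alpha * (1 + z) ^ 3 + 1)) * d
  - / 2 * ((3 * alpha * (1 + z) ^ 3) / (alpha * (1 + z) ^ 3 + 1)) * y.

Lemma ode_lhs_lin alpha a b y1 d1 dd1 y2 d2 dd2 z :
  ode_lhs alpha (a * y1 + b * y2) (a * d1 + b * d2) (a * dd1 + b * dd2) z
  = a * ode_lhs alpha y1 d1 dd1 z + b * ode_lhs alpha y2 d2 dd2 z.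
Proof. unfold ode_lhs. ring. Qed.

Lemma is_derive_zero_const (g : R -> R) :
  (forall z, -1 < z -> is_derive g z 0) -> forall z, -1 < z -> g z = g 0.
Proof.
  intros Hg z Hz.
  assert (Hmin : -1 < Rmin 0 z) by (unfold Rmin; destruct Rle_dec; lra).
  destruct (MVT_gen g 0 z (fun _ => 0)) as [c [_ E]].
  - intros x [Hx _]. apply Hg. lra.
  - intros x [Hx _]. apply continuity_pt_filterlim, continuous_of_ex_derive.
    eexists. apply Hg. lra.
  - lra.
Qed.

Lemma is_derive_lin (f g : R -> R) (a b z df dg : R) :
  is_derive f z df -> is_derive g z dg ->
  is_derive (fun x => a * f x + b * g x) z (a * df + b * dg).
Proof.
  intros Hf Hg.
  exact (is_derive_plus (fun x => a * f x) (fun x => b * g x) z _ _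
           (is_derive_scal f z a df Hf) (is_derive_scal g z b dg Hg)).
Qed.

Section Density_contrast.

Variable alpha : R.
Hypothesis Halpha : 0 < alpha.

Let cube_pos z : -1 < z -> 0 < alpha * (1 + z)^3.
Proof. intros. apply Rmult_lt_0_compat; [auto | apply pow_lt; lra]. Qed.

Let cube_expand z : (1 + z) * ((1 + z) * ((1 + z) * 1)) = (1 + z)^3.
Proof. ring. Qed.

Definition sol1 (z : R) : R := sqrt (1 + alpha * (1 + z)^3).
Definition sol1' (z : R) : R := 3/2 * alpha * (1 + z)^2 / sol1 z.
Definition sol1'' (z : R) : R :=
  3 * alpha * (1 + z) / sol1 z - 9/4 * alpha^2 * (1 + z)^4 / (sol1 z * sol1 z * sol1 z).

Let sol1_pos z : -1 < z -> 0 < sol1 z.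
Proof. intros Hz. apply sqrt_lt_R0. assert (H := cube_pos z Hz). lra. Qed.

(* Rewriting [alpha] through [sol1 z] turns the identities below into
   rational identities in [sol1 z] and [z]. *)
Let alpha_sol1 z : -1 < z -> alpha = (sol1 z * sol1 z - 1) / (1 + z)^3.
Proof.
  intros Hz. assert (H := cube_pos z Hz). unfold sol1.
  rewrite sqrt_sqrt by lra. field. lra.
Qed.

Lemma is_derive_sol1 z : -1 < z -> is_derive sol1 z (sol1' z).
Proof.
  intros Hz. assert (H3 := cube_pos z Hz). assert (HS := sol1_pos z Hz).
  unfold sol1', sol1 in *. auto_derive; rewrite cube_expand; [lra|].
  to_R. field. lra.
Qed.

Lemma is_derive_sol1' z : -1 < z -> is_derive sol1' z (sol1'' z).
Proof.
  intros Hz. assert (H3 := cube_pos z Hz). assert (HS := sol1_pos z Hz).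
  unfold sol1'', sol1', sol1 in *. auto_derive; rewrite cube_expand; [repeat split; lra|].
  to_R. field. lra.
Qed.

Lemma ode_sol1 z : -1 < z -> ode_lhs alpha (sol1 z) (sol1' z) (sol1'' z) z = 0.
Proof.
  intros Hz. assert (HS := sol1_pos z Hz). assert (Hal := alpha_sol1 z Hz).
  unfold ode_lhs, sol1'', sol1'. rewrite Hal.
  field. repeat split; nra.
Qed.

Definition hyp_arg (z : R) : R := - / (alpha * (1 + z)^3).

Definition sol2 (z : R) : R := / (1 + z) * F (hyp_arg z).
Definition sol2' (z : R) : R := (-3 * hyp_arg z * dF (hyp_arg z) - F (hyp_arg z)) / (1 + z)^2.
Definition sol2'' (z : R) : R :=
  (9 * hyp_arg z ^ 2 * d2F (hyp_arg z) + 18 * hyp_arg z * dF (hyp_arg z) + 2 * F (hyp_arg z))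
  / (1 + z)^3.

Lemma hyp_arg_neg z : -1 < z -> hyp_arg z < 0.
Proof.
  intros Hz. unfold hyp_arg. assert (H := cube_pos z Hz).
  assert (0 < / (alpha * (1 + z)^3)) by (apply Rinv_0_lt_compat; auto). lra.
Qed.

Lemma is_derive_hyp_arg z : -1 < z -> is_derive hyp_arg z (3 / (alpha * (1 + z)^4)).
Proof.
  intros Hz. assert (H3 := cube_pos z Hz). unfold hyp_arg.
  auto_derive; rewrite cube_expand; [lra|]. to_R. field. lra.
Qed.

Lemma is_derive_sol2 z : -1 < z -> is_derive sol2 z (sol2' z).
Proof.
  intros Hz. assert (H3 := cube_pos z Hz). assert (Ht := hyp_arg_neg z Hz).
  assert (Hd1 := is_derive_hyp_arg z Hz).
  assert (Hd2 := is_derive_hyp2F1 (hyp_arg z) ltac:(lra)).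
  unfold sol2. auto_derive.
  - repeat split; try (eexists; eassumption). nonzero.
  - replace (Derive (fun x : R => hyp_arg x) z) with (3 / (alpha * (1 + z)^4))
      by (symmetry; now apply is_derive_unique).
    replace (Derive (fun x : R => F x) (hyp_arg z)) with (dF (hyp_arg z))
      by (symmetry; now apply is_derive_unique).
    unfold sol2', hyp_arg. to_R. field. lra.
Qed.

Lemma is_derive_sol2' z : -1 < z -> is_derive sol2' z (sol2'' z).
Proof.
  intros Hz. assert (H3 := cube_pos z Hz). assert (Ht := hyp_arg_neg z Hz).
  assert (Hd1 := is_derive_hyp_arg z Hz).
  assert (Hd2 := is_derive_hyp2F1 (hyp_arg z) ltac:(lra)).
  assert (Hd3 := is_derive_dF (hyp_arg z) ltac:(lra)).
  unfold sol2'. auto_derive.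
  - repeat split; try (eexists; eassumption). nonzero.
  - replace (Derive (fun x : R => hyp_arg x) z) with (3 / (alpha * (1 + z)^4))
      by (symmetry; now apply is_derive_unique).
    replace (Derive (fun x : R => F x) (hyp_arg z)) with (dF (hyp_arg z))
      by (symmetry; now apply is_derive_unique).
    replace (Derive (fun x : R => dF x) (hyp_arg z)) with (d2F (hyp_arg z))
      by (symmetry; now apply is_derive_unique).
    unfold sol2'', hyp_arg. to_R. field. lra.
Qed.

Lemma ode_sol2 z : -1 < z -> ode_lhs alpha (sol2 z) (sol2' z) (sol2'' z) z = 0.
Proof.
  intros Hz. assert (H3 := cube_pos z Hz). assert (Ht := hyp_arg_neg z Hz).
  assert (Hhyp := hyp2F1_ode (hyp_arg z) ltac:(lra)).
  assert (Hd2F : d2F (hyp_arg z) = (F (hyp_arg z) / 3 - (11/6 - 7/3 * hyp_arg z) * dF (hyp_arg z))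
                                   / (hyp_arg z * (1 - hyp_arg z))).
  { assert (Hnz : hyp_arg z * (1 - hyp_arg z) <> 0) by nonzero.
    apply Rmult_eq_reg_r with (hyp_arg z * (1 - hyp_arg z)); [|exact Hnz].
    unfold Rdiv. rewrite Rmult_assoc, Rinv_l, Rmult_1_r by exact Hnz. lra. }
  unfold ode_lhs, sol2, sol2', sol2''. rewrite Hd2F. unfold hyp_arg.
  field. repeat split; lra.
Qed.




(* [first_integral y d] is [sol1 / (1 + z)] times the Wronskian of [sol1]
   and [y]; by Abel's formula it is constant along solutions. *)
Definition first_integral (y d : R -> R) (z : R) : R :=
  ((1 + alpha * (1 + z)^3) * d z - 3/2 * alpha * (1 + z)^2 * y z) / (1 + z).

Lemma is_derive_first_integral (y d dd : R -> R) z :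
  -1 < z -> is_derive y z (d z) -> is_derive d z (dd z) ->
  ode_lhs alpha (y z) (d z) (dd z) z = 0 -> is_derive (first_integral y d) z 0.
Proof.
  intros Hz Hy Hd Hode. assert (H3 := cube_pos z Hz).
  unfold first_integral. auto_derive.
  - repeat split; try (eexists; eassumption); nonzero.
  - replace (Derive (fun x : R => y x) z) with (d z) by (symmetry; now apply is_derive_unique).
    replace (Derive (fun x : R => d x) z) with (dd z) by (symmetry; now apply is_derive_unique).
    transitivity ((1 + alpha * (1 + z)^3) / (1 + z)^3 * ode_lhs alpha (y z) (d z) (dd z) z).
    + unfold ode_lhs. to_R. field. lra.
    + rewrite Hode. ring.
Qed.

Lemma first_integral_zero_multiple_sol1 (v dv : R -> R) :
  (forall z, -1 < z -> is_derive v z (dv z)) ->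
  (forall z, -1 < z -> first_integral v dv z = 0) ->
  forall z, -1 < z -> v z = v 0 / sol1 0 * sol1 z.
Proof.
  intros Hv HW.
  assert (Hratio : forall z, -1 < z -> is_derive (fun z => v z / sol1 z) z 0).
  { intros z Hz. assert (HS := sol1_pos z Hz). assert (Hal := alpha_sol1 z Hz).
    assert (Hdv : dv z = 3/2 * alpha * (1 + z)^2 * v z / (1 + alpha * (1 + z)^3)).
    { assert (H3 := cube_pos z Hz). specialize (HW z Hz). unfold first_integral in HW.
      apply Rmult_integral in HW. destruct HW as [HW | HW].
      - apply (Rmult_eq_reg_l (1 + alpha * (1 + z)^3)); [|lra].
        field_simplify; lra.
      - exfalso. apply (Rinv_neq_0_compat (1 + z)); lra. }
    apply (is_derive_eq _ _ _ _ (is_derive_div _ _ z _ _ (Hv z Hz) (is_derive_sol1 z Hz)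
                                   ltac:(lra))).
    to_R. rewrite Hdv. unfold sol1'. rewrite Hal. field. repeat split; nra. }
  intros z Hz. assert (E := is_derive_zero_const _ Hratio z Hz). simpl in E.
  assert (HS := sol1_pos z Hz). assert (HS0 := sol1_pos 0 ltac:(lra)).
  rewrite <- E. field. lra.
Qed.

(* [sol2 / sol1] is [F (hyp_arg z) / ((1 + z) sol1 z)], with [F (hyp_arg z)]
   near [F 0 = 1] for large [z], whereas [(1 + z) sol1 z] is unbounded. *)
Lemma sol2_not_multiple_sol1 : ~ exists k, forall z, -1 < z -> sol2 z = k * sol1 z.
Proof.
  intros [k Hk].
  destruct hyp2F1_near_0 as [d [Hd Hnear]].
  set (u1 := 1 + 1 / (alpha * d)).
  assert (Hu1 : 1 < u1).
  { unfold u1. assert (0 < 1 / (alpha * d)) by (apply Rdiv_lt_0_compat; nra). lra. }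
  assert (Hfar : forall u, u1 <= u -> 1/2 < k * sol1 (u - 1) * u < 3/2).
  { intros u Hu.
    assert (Hau : alpha * d * u^3 > 1).
    { assert (u <= u^3) by (assert (1 <= u^2) by nra; nra).
      assert (alpha * d * u1 = alpha * d + 1) by (unfold u1; field; lra). nra. }
    assert (Ht : -d < hyp_arg (u - 1) < 0).
    { split; [|apply hyp_arg_neg; lra]. unfold hyp_arg. replace (1 + (u - 1)) with u by ring.
      apply Ropp_lt_contravar. apply Rmult_lt_reg_r with (alpha * u^3); [nra|].
      rewrite Rinv_l by nra. nra. }
    assert (E := Hk (u - 1) ltac:(lra)). unfold sol2 in E.
    replace (1 + (u - 1)) with u in E by ring.
    replace (k * sol1 (u - 1) * u) with (F (hyp_arg (u - 1))); [now apply Hnear|].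
    apply Rmult_eq_reg_l with (/ u); [|apply Rinv_neq_0_compat; lra].
    rewrite E. field. lra. }
  assert (H1 := Hfar u1 ltac:(lra)). assert (H5 := Hfar (5 * u1) ltac:(lra)).
  assert (HS1 := sol1_pos (u1 - 1) ltac:(lra)).
  assert (HS12 : sol1 (u1 - 1) <= sol1 (5 * u1 - 1)).
  { apply sqrt_le_1_alt. replace (1 + (u1 - 1)) with u1 by ring.
    replace (1 + (5 * u1 - 1)) with (5 * u1) by ring.
    assert (u1^3 <= (5 * u1)^3) by (apply pow_incr; lra). nra. }
  assert (0 < k) by nra.
  nra.
Qed.

Definition solves (y d dd : R -> R) : Prop :=
  forall z, -1 < z -> is_derive y z (d z) /\ is_derive d z (dd z) /\
                      ode_lhs alpha (y z) (d z) (dd z) z = 0.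

Lemma solves_sol1 : solves sol1 sol1' sol1''.
Proof.
  intros z Hz.
  split; [|split]; [apply is_derive_sol1 | apply is_derive_sol1' | apply ode_sol1]; auto.
Qed.

Lemma solves_sol2 : solves sol2 sol2' sol2''.
Proof.
  intros z Hz.
  split; [|split]; [apply is_derive_sol2 | apply is_derive_sol2' | apply ode_sol2]; auto.
Qed.

Lemma solves_lin (y1 d1 dd1 y2 d2 dd2 : R -> R) a b :
  solves y1 d1 dd1 -> solves y2 d2 dd2 ->
  solves (fun z => a * y1 z + b * y2 z) (fun z => a * d1 z + b * d2 z)
         (fun z => a * dd1 z + b * dd2 z).
Proof.
  intros H1 H2 z Hz.
  destruct (H1 z Hz) as [Hy1 [Hd1 Ho1]], (H2 z Hz) as [Hy2 [Hd2 Ho2]].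
  split; [|split]; [now apply is_derive_lin .. |].
  rewrite ode_lhs_lin, Ho1, Ho2. ring.
Qed.

Lemma first_integral_const (y d dd : R -> R) :
  solves y d dd -> forall z, -1 < z -> first_integral y d z = first_integral y d 0.
Proof.
  intros Hsol. apply is_derive_zero_const. intros z Hz.
  destruct (Hsol z Hz) as [Hy [Hd Ho]]. now apply (is_derive_first_integral y d dd).
Qed.

Lemma first_integral_lin (y1 d1 y2 d2 : R -> R) a b z : -1 < z ->
  first_integral (fun z => a * y1 z + b * y2 z) (fun z => a * d1 z + b * d2 z) z
  = a * first_integral y1 d1 z + b * first_integral y2 d2 z.
Proof. intros Hz. unfold first_integral. field. lra. Qed.

Lemma first_integral_sol2_neq_0 : first_integral sol2 sol2' 0 <> 0.
Proof.
  intros H0. apply sol2_not_multiple_sol1. exists (sol2 0 / sol1 0).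
  apply first_integral_zero_multiple_sol1 with sol2'; [intros z Hz; now apply is_derive_sol2|].
  intros z Hz. now rewrite (first_integral_const _ _ _ solves_sol2 z Hz).
Qed.

End Density_contrast.

Lemma general_sol_eq alpha k1 k2 z :
  general_sol alpha k1 k2 z = k1 * sol1 alpha z + k2 * sol2 alpha z.
Proof. unfold general_sol, sol1, sol2, hyp_arg. ring. Qed.

Theorem mainTheorem10 (alpha : R) (Halpha : 0 < alpha) :
  (forall k1 k2 : R, is_ode_solution alpha (general_sol alpha k1 k2)) /\
  (forall delta : R -> R, is_ode_solution alpha delta ->
     exists k1 k2 : R, forall z, -1 < z -> delta z = general_sol alpha k1 k2 z).
Proof.
  split.
  - intros k1 k2. exists (fun z => k1 * sol1' alpha z + k2 * sol2' alpha z),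
                         (fun z => k1 * sol1'' alpha z + k2 * sol2'' alpha z).
    intros z Hz.
    destruct (solves_lin alpha _ _ _ _ _ _ k1 k2 (solves_sol1 alpha Halpha)
                (solves_sol2 alpha Halpha) z Hz) as [Hy [Hd Ho]].
    split; [|split; [exact Hd|]].
    + eapply is_derive_ext; [|exact Hy]. intros t. cbv beta. now rewrite general_sol_eq.
    + rewrite general_sol_eq. exact Ho.
  - intros delta [d [dd Hdelta]].
    set (c2 := first_integral alpha (sol2 alpha) (sol2' alpha) 0).
    set (k2 := first_integral alpha delta d 0 / c2).
    set (v := fun z => 1 * delta z + (- k2) * sol2 alpha z).
    assert (Hv := solves_lin alpha _ _ _ _ _ _ 1 (- k2) Hdelta (solves_sol2 alpha Halpha)).
    assert (Hprop : forall z, -1 < z -> v z = v 0 / sol1 alpha 0 * sol1 alpha z).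
    { apply (first_integral_zero_multiple_sol1 alpha Halpha v _ (fun z Hz => proj1 (Hv z Hz))).
      intros t Ht. unfold v. rewrite first_integral_lin by exact Ht.
      rewrite (first_integral_const alpha Halpha _ _ _ Hdelta t Ht),
        (first_integral_const alpha Halpha _ _ _ (solves_sol2 alpha Halpha) t Ht).
      fold c2. unfold k2. field. now apply first_integral_sol2_neq_0. }
    exists (v 0 / sol1 alpha 0), k2. intros z Hz.
    rewrite general_sol_eq, <- Hprop by exact Hz. unfold v. ring.
Qed.
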